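(* Let $(U(n))_{n\geqslant 0}$ be an arithmetic progression of positive integers, $U(n)=U(0)+nd$ with $d$ an integer, and let $l$ be a positive integer. (i) Let $S(n)$ be the right-concatenation $\overline{U(0)U(1)\cdots U(n)}$. Then for every $n\geqslant 0$ such that $U(n+1)$, $U(n+2)$, $U(n+3)$ all have exactly $l$ decimal digits, $$S(n+3) - (10^l+2)\, S(n+2) + (2\cdot 10^l + 1)\, S(n+1) - 10^l\, S(n) = 0.$$ (ii) Let $S(n)$ be the left-concatenation $\overline{U(n)U(n-1)\cdots U(0)}$. Then for every $n\geqslant 0$ such that $U(n+1)$, $U(n+2)$, $U(n+3)$ all have exactly $l$ decimal digits, $$S(n+3) - (2\cdot 10^l + 1)\, S(n+2) + (10^{2l}+2\cdot 10^l)\, S(n+1) - 10^{2l}\, S(n) = 0.$$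
   Context: For positive integers $a_0,\ldots,a_k$, $\overline{a_0a_1\cdots a_k}$ denotes the integer whose decimal expansion is the decimal expansion of $a_0$ followed by that of $a_1$, ..., followed by that of $a_k$. Thus for the right-concatenation $S(n+1)=S(n)\cdot 10^{k}+U(n+1)$ with $k$ the number of digits of $U(n+1)$, and for the left-concatenation $S(n+1)=U(n+1)\cdot 10^{p}+S(n)$ with $p$ the number of digits of $S(n)$. *)

From mathcomp Require Import all_boot all_order all_algebra.
Set Implicit Arguments. Unset Strict Implicit. Unset Printing Implicit Defensive.
Import Order.TTheory GRing.Theory Num.Theory.

(* number of decimal digits of m (with the convention ndigits 0 = 1);
   fuel m is sufficient since m %/ 10 < m for m >= 10 *)
Fixpoint ndigits_rec (fuel m : nat) : nat :=
  match fuel with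
  | 0 => 1
  | f.+1 => if m < 10 then 1 else (ndigits_rec f (m %/ 10)).+1
  end.
Definition ndigits (m : nat) : nat := ndigits_rec m m.

Definition dconcat (a b : nat) : nat := a * 10 ^ ndigits b + b.

Fixpoint Sright (U : nat -> nat) (n : nat) : nat :=
  match n with
  | 0 => U 0
  | k.+1 => dconcat (Sright U k) (U k.+1)
  end.

Fixpoint Sleft (U : nat -> nat) (n : nat) : nat :=
  match n with
  | 0 => U 0
  | k.+1 => dconcat (U k.+1) (Sleft U k)
  end.

From mathcomp Require Import all_boot all_order all_algebra.
Import Order.TTheory GRing.Theory Num.Theory.
From mathcomp Require Import ring.

(* With x = 10^l, right concatenation obeys S(k+1) = x S(k) + U(k+1), and left
   concatenation S(k+1) = U(k+1) 10^|S(k)| + S(k), where the length |S(k)| grows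
   by l at each of the three steps since the number of digits is additive under
   concatenation.  Eliminating S from three such steps leaves
   U(n+3) - 2 U(n+2) + U(n+1) (up to the factor 10^(2l + |S(n)|) on the left),
   the second difference of an arithmetic progression, which is 0. *)

Set Implicit Arguments.
Unset Strict Implicit.
Unset Printing Implicit Defensive.

Lemma ndigitsE m : ndigits m = (trunc_log 10 m).+1.
Proof.
rewrite /ndigits /trunc_log /=.
elim: m {2 3}m => [|f IH] m //=.
by rewrite ltnNge; case: leqP => //= _; rewrite IH.
Qed.

Lemma ltn_exp_ndigits m : m < 10 ^ ndigits m.
Proof. by rewrite ndigitsE trunc_log_ltn. Qed.

Lemma ndigits_dconcat a b : 0 < a -> ndigits (dconcat a b) = ndigits a + ndigits b.
Proof.
move=> a_gt0; rewrite /dconcat [LHS]ndigitsE [ndigits a]ndigitsE addSn.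
congr _.+1; apply: trunc_log_eq => //; apply/andP; split.
  rewrite expnD; apply: leq_trans (leq_addr b _).
  by rewrite leq_mul2r trunc_logP ?orbT.
rewrite -[(_ + ndigits b).+1]addSn expnD (@leq_trans ((a + 1) * 10 ^ ndigits b)) //.
  by rewrite mulnDl mul1n ltn_add2l ltn_exp_ndigits.
by rewrite leq_mul2r addn1 trunc_log_ltn ?orbT.
Qed.

Local Open Scope ring_scope.

Lemma dconcatZ a b : (dconcat a b)%:Z = a%:Z * 10 ^+ ndigits b + b%:Z.
Proof. by rewrite /dconcat PoszD PoszM -[Posz (10 ^ _)]natz natrX. Qed.

Lemma arith_prog_diff2 (a d : int) (u : nat -> int) :
  (forall n, u n = a + n%:Z * d) -> forall n, u n.+2 - 2 * u n.+1 + u n = 0.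
Proof. by move=> uE n; rewrite !uE -addn2 -addn1 !PoszD; ring. Qed.

Section ConcatRecurrences.
Variables (R : comPzRingType) (x : R) (s0 s1 s2 s3 u1 u2 u3 : R).
Hypothesis u_diff2 : u3 - 2 * u2 + u1 = 0.

Lemma right_concat_recurrence :
  s1 = s0 * x + u1 -> s2 = s1 * x + u2 -> s3 = s2 * x + u3 ->
  s3 - (x + 2) * s2 + (2 * x + 1) * s1 - x * s0 = 0.
Proof. by move=> -> -> ->; rewrite -[RHS]u_diff2; ring. Qed.

Lemma left_concat_recurrence (y : R) :
  s1 = u1 * y + s0 -> s2 = u2 * (x * y) + s1 -> s3 = u3 * (x * (x * y)) + s2 ->
  s3 - (2 * x + 1) * s2 + (x ^+ 2 + 2 * x) * s1 - x ^+ 2 * s0 = 0.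
Proof.
move=> -> -> ->.
have -> : u3 = 2 * u2 - u1 by rewrite -[u3]subr0 -u_diff2; ring.
ring.
Qed.

End ConcatRecurrences.

Theorem lemma2 (U : nat -> nat) (d : int) (l : nat)
  (hpos : forall n, (0 < U n)%N)
  (hAP : forall n, (U n)%:Z = (U 0)%:Z + n%:Z * d)
  (hl : (0 < l)%N) :
  (forall n : nat,
     ndigits (U n.+1) = l -> ndigits (U n.+2) = l -> ndigits (U n.+3) = l ->
     (Sright U n.+3)%:Z - (10 ^+ l + 2) * (Sright U n.+2)%:Z
       + (2 * 10 ^+ l + 1) * (Sright U n.+1)%:Z - 10 ^+ l * (Sright U n)%:Z = 0)
  /\
  (forall n : nat,
     ndigits (U n.+1) = l -> ndigits (U n.+2) = l -> ndigits (U n.+3) = l ->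
     (Sleft U n.+3)%:Z - (2 * 10 ^+ l + 1) * (Sleft U n.+2)%:Z
       + (10 ^+ (2 * l) + 2 * 10 ^+ l) * (Sleft U n.+1)%:Z
       - 10 ^+ (2 * l) * (Sleft U n)%:Z = 0).
Proof.
have u_diff2 n : (U n.+3)%:Z - 2 * (U n.+2)%:Z + (U n.+1)%:Z = 0.
  exact: (@arith_prog_diff2 _ _ (fun k => (U k)%:Z) hAP n.+1).
split=> n h1 h2 h3.
  by apply: right_concat_recurrence (u_diff2 n) _ _ _; rewrite /= dconcatZ ?h1 ?h2 ?h3.
have d1 : ndigits (Sleft U n.+1) = (l + ndigits (Sleft U n))%N.
  by rewrite ndigits_dconcat // h1.
have d2 : ndigits (Sleft U n.+2) = (l + (l + ndigits (Sleft U n)))%N.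
  by rewrite ndigits_dconcat // h2 d1.
rewrite mulnC exprM.
apply: (left_concat_recurrence (y := 10 ^+ ndigits (Sleft U n)) (u_diff2 n)).
- by rewrite /= dconcatZ.
- by rewrite [Sleft U n.+2]/= dconcatZ d1 exprD.
- by rewrite [Sleft U n.+3]/= dconcatZ d2 !exprD.
Qed.
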